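(* Let $D\ge 1$ and $p\ge 1$ be integers, let $h>0$, let $Q\subset\mathbb{R}^D$ be a finite set of query points, let $c_Q\in\mathbb{R}^D$, and let $R\subset\mathbb{R}^D$ be a finite set of reference points. For each multi-index $\beta$ with $\beta<p$, define the local moment $$L_\beta=\sum_{r\in R}\frac{(-1)^{|\beta|}}{\beta!}\,h_\beta\!\left(\frac{c_Q-r}{\sqrt{2h^2}}\right),$$ and for $q\in\mathbb{R}^D$ define $$\widetilde G(q)=\sum_{\beta<p}L_\beta\left(\frac{q-c_Q}{\sqrt{2h^2}}\right)^{\beta},\qquad G(q)=\sum_{r\in R}e^{-\|q-r\|^2/(2h^2)}.$$ Suppose there is $r_0$ with $0\le r_0<1$ such that $\|q-c_Q\|_\infty<r_0h$ for every $q\in Q$. Then for every $q\in Q$, $$\bigl|\widetilde G(q)-G(q)\bigr|\le\frac{|R|}{(1-r_0)^D}\sum_{k=0}^{D-1}\binom{D}{k}(1-r_0^p)^k\left(\frac{r_0^p}{\sqrt{p!}}\right)^{D-k}.$$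
   Context: Hermite polynomials: $H_n(t)=(-1)^n e^{t^2}\frac{d^n}{dt^n}e^{-t^2}$ for $t\in\mathbb{R}$; Hermite functions: $h_n(t)=e^{-t^2}H_n(t)$. For a $D$-dimensional multi-index $\alpha=(\alpha[1],\dots,\alpha[D])$ of non-negative integers and $t\in\mathbb{R}^D$: $h_\alpha(t)=\prod_{d=1}^D h_{\alpha[d]}(t[d])$, $|\alpha|=\sum_d\alpha[d]$, $\alpha!=\prod_d\alpha[d]!$, $t^\alpha=\prod_d t[d]^{\alpha[d]}$. For an integer $p$, ''$\alpha<p$'' means $\alpha[d]<p$ for every $d=1,\dots,D$ (so the sum over $\beta<p$ has $p^D$ terms). $\|\cdot\|$ is the Euclidean norm and $\|\cdot\|_\infty$ the max norm; $|R|$ is the number of points in $R$. *)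

From Stdlib Require Import Reals List Arith Factorial.
Import ListNotations.
Open Scope R_scope.

(* Points of R^D are functions nat -> R, coordinates 0..D-1 (0-based);
   multi-indices are functions nat -> nat. *)

Inductive nth_derivative : nat -> (R -> R) -> (R -> R) -> Prop :=
| nd_zero : forall f, nth_derivative 0 f f
| nd_succ : forall n f g g',
    nth_derivative n f g ->
    (forall t, derivable_pt_lim g t (g' t)) ->
    nth_derivative (S n) f g'.

Definition gauss (t : R) : R := exp (- t ^ 2).

Definition is_hermite_poly (H : nat -> R -> R) : Prop :=
  forall n, exists g, nth_derivative n gauss g /\
    forall t, H n t = (-1) ^ n * exp (t ^ 2) * g t.

Definition hermite_fun (H : nat -> R -> R) (n : nat) (t : R) : R :=
  exp (- t ^ 2) * H n t.

Fixpoint sumN (n : nat) (f : nat -> R) : R :=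
  match n with O => 0 | S m => sumN m f + f m end.
Fixpoint prodN (n : nat) (f : nat -> R) : R :=
  match n with O => 1 | S m => prodN m f * f m end.
Fixpoint sumNat (n : nat) (f : nat -> nat) : nat :=
  match n with O => 0%nat | S m => (sumNat m f + f m)%nat end.

Definition h_multi (H : nat -> R -> R) (D : nat) (a : nat -> nat) (t : nat -> R) : R :=
  prodN D (fun d => hermite_fun H (a d) (t d)).
Definition mabs (D : nat) (a : nat -> nat) : nat := sumNat D a.
Definition mfact (D : nat) (a : nat -> nat) : R := prodN D (fun d => INR (fact (a d))).
Definition mpow (D : nat) (t : nat -> R) (a : nat -> nat) : R := prodN D (fun d => t d ^ (a d)).

(* sum over all multi-indices beta with beta[d] < p for d < D (p^D terms);
   entries at indices >= D are 0. *)
Definition upd (b : nat -> nat) (i j : nat) : nat -> nat :=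
  fun d => if Nat.eqb d i then j else b d.
Fixpoint sum_multi_aux (D p : nat) (b : nat -> nat) (F : (nat -> nat) -> R) : R :=
  match D with
  | O => F b
  | S D' => sumN p (fun j => sum_multi_aux D' p (upd b D' j) F)
  end.
Definition sum_multi (D p : nat) (F : (nat -> nat) -> R) : R :=
  sum_multi_aux D p (fun _ => 0%nat) F.

Definition vsub (x y : nat -> R) : nat -> R := fun d => x d - y d.
Definition vscale (c : R) (x : nat -> R) : nat -> R := fun d => c * x d.
Definition norm2sq (D : nat) (x : nat -> R) : R := sumN D (fun d => x d ^ 2).
Definition in_RD (D : nat) (x : nat -> R) : Prop := forall d, (D <= d)%nat -> x d = 0.

Definition sum_list (l : list (nat -> R)) (F : (nat -> R) -> R) : R :=
  fold_right (fun x acc => F x + acc) 0 l.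

Definition local_moment (H : nat -> R -> R) (D : nat) (h : R) (cQ : nat -> R)
  (Rs : list (nat -> R)) (b : nat -> nat) : R :=
  sum_list Rs (fun r => (-1) ^ (mabs D b) / mfact D b *
     h_multi H D b (vscale (/ sqrt (2 * h ^ 2)) (vsub cQ r))).

Definition G_approx (H : nat -> R -> R) (D p : nat) (h : R) (cQ : nat -> R)
  (Rs : list (nat -> R)) (q : nat -> R) : R :=
  sum_multi D p (fun b => local_moment H D h cQ Rs b *
     mpow D (vscale (/ sqrt (2 * h ^ 2)) (vsub q cQ)) b).

Definition G_exact (D : nat) (h : R) (Rs : list (nat -> R)) (q : nat -> R) : R :=
  sum_list Rs (fun r => exp (- norm2sq D (vsub q r) / (2 * h ^ 2))).

From Stdlib Require Import Reals List Arith Factorial Lra Lia Psatz FunctionalExtensionality.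
From Coquelicot Require Import Derive.
Open Scope R_scope.

(* Scaling by [s = sqrt (2 h^2)], write [x = (q - c_Q)/s] and [u = (c_Q - r)/s].
   Both [G] and its approximation are sums over [R] of products over the [D]
   coordinates: of [g_0 (u_d + x_d)] for [G], and of the order-[p] Taylor polynomial
   of [g_0] at [u_d] evaluated at [x_d] for the approximation, where
   [g_k = (-1)^k h_k] is the [k]-th derivative of the Gaussian [g_0 = exp (- t^2)].
   Cramér's inequality [g_k^2 <= 2^k k!] and [x_d^2 <= r0^2/2] bound each Taylor
   polynomial by [sum_k r0^k <= (1 - r0^p)/(1 - r0)] and each Lagrange remainder by
   [r0^p / sqrt (p!)].  Expanding a difference of two products of [D] factors with
   these bounds gives [(A + B)^D - A^D], and the binomial theorem turns this into
   the stated sum. *)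

Lemma sumN_ext n f g : (forall k, (k < n)%nat -> f k = g k) -> sumN n f = sumN n g.
Proof. induction n; intros E; simpl; auto. rewrite IHn, E; auto. Qed.

Lemma prodN_ext n f g : (forall k, (k < n)%nat -> f k = g k) -> prodN n f = prodN n g.
Proof. induction n; intros E; simpl; auto. rewrite IHn, E; auto. Qed.

Lemma sumN_0 n : sumN n (fun _ => 0) = 0.
Proof. induction n; simpl; [|rewrite IHn]; ring. Qed.

Lemma sumN_plus n f g : sumN n (fun k => f k + g k) = sumN n f + sumN n g.
Proof. induction n; simpl; [|rewrite IHn]; ring. Qed.

Lemma sumN_scal n c f : sumN n (fun k => c * f k) = c * sumN n f.
Proof. induction n; simpl; [|rewrite IHn]; ring. Qed.

Lemma sumN_abs n f : Rabs (sumN n f) <= sumN n (fun k => Rabs (f k)).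
Proof.
  induction n; simpl; [rewrite Rabs_R0; lra|].
  eapply Rle_trans; [apply Rabs_triang|lra].
Qed.

Lemma sumN_le n f g : (forall k, (k < n)%nat -> f k <= g k) -> sumN n f <= sumN n g.
Proof. induction n; intros E; simpl; [lra|]. apply Rplus_le_compat; auto. Qed.

Lemma sumN_sum_f_R0 n f : sumN (S n) f = sum_f_R0 f n.
Proof. induction n; simpl in *; [ring|]. now rewrite IHn. Qed.

Lemma sumN_geom n r : r <> 1 -> sumN n (fun k => r ^ k) = (1 - r ^ n) / (1 - r).
Proof.
  intros Hr. induction n; simpl; [|rewrite IHn]; field; lra.
Qed.

Lemma pow_m1_mul_self n : (-1) ^ n * (-1) ^ n = 1.
Proof. rewrite <- pow_add, <- (pow_1_even n). f_equal. lia. Qed.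

Lemma prodN_1 n : prodN n (fun _ => 1) = 1.
Proof. induction n; simpl; [|rewrite IHn]; ring. Qed.

Lemma prodN_mult n f g : prodN n (fun k => f k * g k) = prodN n f * prodN n g.
Proof. induction n; simpl; [|rewrite IHn]; ring. Qed.

Lemma prodN_inv n f : / prodN n f = prodN n (fun k => / f k).
Proof. induction n; simpl; [apply Rinv_1|rewrite Rinv_mult, IHn; ring]. Qed.

Lemma pow_sumNat n (a : nat -> nat) x : x ^ sumNat n a = prodN n (fun k => x ^ a k).
Proof. induction n; simpl; [|rewrite pow_add, IHn]; ring. Qed.

Lemma exp_opp_sumN n (a : nat -> R) c :
  exp (- sumN n a / c) = prodN n (fun k => exp (- a k / c)).
Proof.
  induction n; simpl.
  - replace (- 0 / c) with 0 by (unfold Rdiv; ring). apply exp_0.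
  - rewrite <- IHn, <- exp_plus. f_equal. unfold Rdiv; ring.
Qed.

Lemma prodN_split_at n k f : (k < n)%nat ->
  prodN n f = f k * prodN n (fun d => if Nat.eqb d k then 1 else f d).
Proof.
  induction n as [|n IH]; intros Hk; [lia|]. simpl.
  destruct (Nat.eq_dec k n) as [->|Hkn].
  - rewrite Nat.eqb_refl, (prodN_ext n (fun d => if Nat.eqb d n then 1 else f d) f);
      [ring|].
    intros d Hd. destruct (Nat.eqb_spec d n); [lia|auto].
  - rewrite (IH ltac:(lia)). destruct (Nat.eqb_spec n k); [lia|ring].
Qed.

Lemma prodN_sub_bound n (P Q : nat -> R) A B : 0 <= A -> 0 <= B ->
  (forall k, (k < n)%nat -> Rabs (P k) <= A /\ Rabs (Q k - P k) <= B) ->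
  Rabs (prodN n P - prodN n Q) <= (A + B) ^ n - A ^ n /\ Rabs (prodN n Q) <= (A + B) ^ n.
Proof.
  intros HA HB. induction n as [|n IH]; intros Hk; simpl.
  - rewrite Rminus_diag, Rabs_R0, Rabs_R1. lra.
  - destruct IH as [Hdiff HQ]; [intros; apply Hk; lia|].
    destruct (Hk n ltac:(lia)) as [HPn HQPn].
    assert (HQn : Rabs (Q n) <= A + B).
    { replace (Q n) with (P n + (Q n - P n)) by ring.
      eapply Rle_trans; [apply Rabs_triang|lra]. }
    assert (0 <= A ^ n) by (apply pow_le; lra).
    assert (A ^ n <= (A + B) ^ n) by (apply pow_incr; lra).
    split.
    + replace (prodN n P * P n - prodN n Q * Q n) with
        ((prodN n P - prodN n Q) * P n - prodN n Q * (Q n - P n)) by ring.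
      eapply Rle_trans; [apply Rabs_triang|]. rewrite Rabs_Ropp, !Rabs_mult.
      apply Rle_trans with (((A + B) ^ n - A ^ n) * A + (A + B) ^ n * B); [|lra].
      apply Rplus_le_compat; apply Rmult_le_compat; auto using Rabs_pos; lra.
    + rewrite Rabs_mult, Rmult_comm. apply Rmult_le_compat; auto using Rabs_pos; lra.
Qed.

(* With the coordinates [k..n-1] of [b] fixed, the sum over the first [k] ones
   factorizes. *)
Lemma sum_multi_aux_prodN n p (f : nat -> nat -> R) : forall k b, (k <= n)%nat ->
  sum_multi_aux k p b (fun a => prodN n (fun d => f d (a d))) =
  prodN k (fun d => sumN p (f d)) * prodN n (fun d => if Nat.ltb d k then 1 else f d (b d)).
Proof.
  induction k as [|k IH]; intros b Hk; simpl.
  - rewrite Rmult_1_l. apply prodN_ext. intros d _; now destruct d.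
  - set (X := prodN k (fun d => sumN p (f d)) *
        prodN n (fun d => if Nat.ltb d (S k) then 1 else f d (b d))).
    rewrite (sumN_ext p _ (fun j => X * f k j)); [rewrite sumN_scal; unfold X; ring|].
    intros j _. rewrite IH, (prodN_split_at n k) by lia.
    unfold upd at 1. rewrite Nat.ltb_irrefl, Nat.eqb_refl.
    unfold X. rewrite (prodN_ext n _ (fun d => if Nat.ltb d (S k) then 1 else f d (b d)));
      [ring|].
    intros d _. unfold upd.
    destruct (Nat.eqb_spec d k), (Nat.ltb_spec d k), (Nat.ltb_spec d (S k)); subst;
      auto; lia.
Qed.

Lemma sum_multi_prodN n p (f : nat -> nat -> R) :
  sum_multi n p (fun a => prodN n (fun d => f d (a d))) = prodN n (fun d => sumN p (f d)).
Proof.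
  unfold sum_multi. rewrite sum_multi_aux_prodN by lia.
  rewrite (prodN_ext n (fun d => if Nat.ltb d n then 1 else f d 0%nat) (fun _ => 1)),
    prodN_1; [ring|].
  intros d Hd. destruct (Nat.ltb_spec d n); [auto|lia].
Qed.

Lemma sum_list_ext (l : list (nat -> R)) F G :
  (forall r, F r = G r) -> sum_list l F = sum_list l G.
Proof. intros E; induction l; simpl; [|rewrite IHl, E]; auto. Qed.

Lemma sum_list_mult_r (l : list (nat -> R)) F c :
  sum_list l F * c = sum_list l (fun r => F r * c).
Proof. induction l; simpl; [|rewrite <- IHl]; ring. Qed.

Lemma sum_list_minus (l : list (nat -> R)) F G :
  sum_list l F - sum_list l G = sum_list l (fun r => F r - G r).
Proof. induction l; simpl; [|rewrite <- IHl]; ring. Qed.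

Lemma sum_list_abs_le (l : list (nat -> R)) F M :
  (forall r, Rabs (F r) <= M) -> Rabs (sum_list l F) <= INR (length l) * M.
Proof.
  intros HF. induction l as [|r l IH]; simpl length; simpl sum_list.
  - rewrite Rabs_R0, Rmult_0_l. lra.
  - rewrite S_INR. eapply Rle_trans; [apply Rabs_triang|]. specialize (HF r). lra.
Qed.

Lemma sum_multi_aux_sum_list k p (l : list (nat -> R)) (F : (nat -> R) -> (nat -> nat) -> R) :
  forall b, sum_multi_aux k p b (fun a => sum_list l (fun r => F r a)) =
            sum_list l (fun r => sum_multi_aux k p b (F r)).
Proof.
  induction k as [|k IH]; intros b; simpl; auto.
  rewrite (sumN_ext p _ (fun j => sum_list l (fun r => sum_multi_aux k p (upd b k j) (F r))))
    by (intros; apply IH).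
  clear IH. induction l as [|r l IHl]; simpl.
  - apply sumN_0.
  - now rewrite sumN_plus, IHl.
Qed.

Lemma derivable_pt_lim_eq_value f x l1 l2 :
  l1 = l2 -> derivable_pt_lim f x l1 -> derivable_pt_lim f x l2.
Proof. now intros ->. Qed.

Lemma gauss_derivable_pt_lim t : derivable_pt_lim gauss t (-2 * t * gauss t).
Proof.
  assert (Hsq : derivable_pt_lim (fun y => - y ^ 2) t (- (INR 2 * t ^ 1))).
  { apply (derivable_pt_lim_opp (fun y => y ^ 2)), derivable_pt_lim_pow. }
  eapply derivable_pt_lim_eq_value;
    [|exact (derivable_pt_lim_comp _ _ _ _ _ Hsq (derivable_pt_lim_exp (- t ^ 2)))].
  unfold gauss. simpl. ring.
Qed.

Lemma nth_derivative_unique n f g1 g2 :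
  nth_derivative n f g1 -> nth_derivative n f g2 -> g1 = g2.
Proof.
  intros D1; revert g2; induction D1 as [f|n f g g' _ IH Hg]; intros g2 D2;
    inversion D2 as [|n' f' g0 g2' D2' Hg2]; subst; auto.
  apply functional_extensionality; intros t.
  rewrite (IH g0 D2') in Hg. exact (uniqueness_limite _ _ _ _ (Hg t) (Hg2 t)).
Qed.

(* Rodrigues' formula read backwards: [gauss_deriv H n] is the [n]-th derivative of [gauss]. *)
Definition gauss_deriv (H : nat -> R -> R) (n : nat) (t : R) : R :=
  (-1) ^ n * hermite_fun H n t.

Lemma hermite_fun_gauss_deriv H n t : hermite_fun H n t = (-1) ^ n * gauss_deriv H n t.
Proof. unfold gauss_deriv. rewrite <- Rmult_assoc, pow_m1_mul_self. ring. Qed.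

Section HermitePolynomials.

Variable H : nat -> R -> R.
Hypothesis H_hermite : is_hermite_poly H.

Lemma nth_derivative_gauss_deriv n : nth_derivative n gauss (gauss_deriv H n).
Proof.
  destruct (H_hermite n) as [g [Hg HHg]].
  replace (gauss_deriv H n) with g; [exact Hg|].
  apply functional_extensionality; intros t. unfold gauss_deriv, hermite_fun.
  rewrite HHg. replace (exp (- t ^ 2)) with (/ exp (t ^ 2)) by (rewrite exp_Ropp; ring).
  field_simplify; [|apply Rgt_not_eq, exp_pos].
  rewrite <- pow_mult, Nat.mul_comm, pow_mult. replace ((-1) ^ 2) with 1 by ring.
  now rewrite pow1, Rmult_1_r.
Qed.

Lemma gauss_deriv_0 t : gauss_deriv H 0 t = gauss t.
Proof.
  now rewrite (nth_derivative_unique 0 gauss _ gauss (nth_derivative_gauss_deriv 0) (nd_zero _)).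
Qed.

Lemma gauss_deriv_derivable n t :
  derivable_pt_lim (gauss_deriv H n) t (gauss_deriv H (S n) t).
Proof.
  pose proof (nth_derivative_gauss_deriv (S n)) as HSn.
  inversion HSn as [|n' f g g' Hn Hd]; subst.
  now rewrite <- (nth_derivative_unique n gauss g _ Hn (nth_derivative_gauss_deriv n)).
Qed.

End HermitePolynomials.

Lemma le_value_at_0_of_deriv_sign f f' t :
  (forall y, derivable_pt_lim f y (f' y)) -> (forall y, y * f' y <= 0) -> f t <= f 0.
Proof.
  intros Hf Hsign.
  destruct (Rtotal_order t 0) as [Ht|[->|Ht]]; [| lra |].
  - destruct (MVT_cor2 f f' t 0 Ht (fun c _ => Hf c)) as [z [E [_ Hz]]].
    specialize (Hsign z). nra.
  - destruct (MVT_cor2 f f' 0 t Ht (fun c _ => Hf c)) as [z [E [Hz _]]].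
    specialize (Hsign z). nra.
Qed.

Section GaussDerivatives.

Variable g : nat -> R -> R.
Hypothesis g_0 : forall t, g 0%nat t = gauss t.
Hypothesis g_deriv : forall n t, derivable_pt_lim (g n) t (g (S n) t).

Lemma gauss_deriv_rec n t : g (S n) t = -2 * t * g n t - 2 * INR n * g (pred n) t.
Proof.
  revert t; induction n as [|n IH]; intros t.
  - apply (uniqueness_limite (g 0%nat) t); [apply g_deriv|].
    replace (g 0%nat) with gauss
      by (apply functional_extensionality; intros; now rewrite g_0).
    eapply derivable_pt_lim_eq_value; [|apply gauss_derivable_pt_lim]. simpl; ring.
  - apply (uniqueness_limite (g (S n)) t); [apply g_deriv|].
    replace (g (S n)) with (fun t => -2 * t * g n t - 2 * INR n * g (pred n) t)
      by (apply functional_extensionality; intros; now rewrite IH).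
    eapply derivable_pt_lim_eq_value; [|apply derivable_pt_lim_minus].
    3: apply derivable_pt_lim_mult; [apply derivable_pt_lim_const|apply g_deriv].
    2: apply derivable_pt_lim_mult; [|apply g_deriv].
    2: apply (derivable_pt_lim_scal id), derivable_pt_lim_id.
    cbv beta. rewrite IH. destruct n as [|m]; simpl pred; rewrite ?S_INR; simpl INR; ring.
Qed.

Lemma gauss_deriv_at_0 n :
  g n 0 ^ 2 <= 2 ^ n * INR (fact n) /\ g (S n) 0 ^ 2 <= 2 ^ S n * INR (fact (S n)) /\
  g n 0 * g (S n) 0 = 0.
Proof.
  induction n as [|n [IH0 [IH1 IHprod]]].
  - rewrite gauss_deriv_rec, g_0. unfold gauss. simpl.
    replace (- (0 * (0 * 1))) with 0 by ring. rewrite exp_0. lra.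
  - rewrite (gauss_deriv_rec (S n)). simpl pred.
    replace (g (S n) 0 * (-2 * 0 * g (S n) 0 - 2 * INR (S n) * g n 0))
      with (-2 * INR (S n) * (g n 0 * g (S n) 0)) by ring.
    rewrite IHprod. repeat split; [exact IH1| |ring].
    rewrite !fact_simpl, !mult_INR, !S_INR.
    replace ((-2 * 0 * g (S n) 0 - 2 * (INR n + 1) * g n 0) ^ 2)
      with (4 * (INR n + 1) ^ 2 * g n 0 ^ 2) by ring.
    pose proof (pos_INR n). pose proof (pos_INR (fact n)).
    assert (0 <= 2 ^ n) by (apply pow_le; lra).
    simpl pow. nra.
Qed.

(* Cramér's inequality: [g n ^ 2 + g (S n) ^ 2 / (2 (n + 1))] has derivative
   [-2 t g (S n) ^ 2 / (n + 1)], so it is maximal at [0], where [g n] or [g (S n)]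
   vanishes. *)
Lemma gauss_deriv_sq_le n t : g n t ^ 2 <= 2 ^ n * INR (fact n).
Proof.
  pose proof (pos_INR n) as Hn.
  set (c := 2 * (INR n + 1)).
  set (V := fun y => g n y * g n y + g (S n) y * g (S n) y * / c).
  assert (HV : forall y, derivable_pt_lim V y (-2 * y * g (S n) y ^ 2 / (INR n + 1))).
  { intros y. eapply derivable_pt_lim_eq_value; [|apply derivable_pt_lim_plus].
    2: apply derivable_pt_lim_mult; apply g_deriv.
    2: apply derivable_pt_lim_mult; [apply derivable_pt_lim_mult; apply g_deriv|].
    2: apply derivable_pt_lim_const.
    rewrite (gauss_deriv_rec (S n)). simpl pred. rewrite S_INR. unfold c. field. lra. }
  assert (HV0 : V 0 <= 2 ^ n * INR (fact n)).
  { destruct (gauss_deriv_at_0 n) as [H0 [H1 Hprod]]. unfold V.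
    rewrite fact_simpl, mult_INR, S_INR in H1. simpl pow in *.
    destruct (Rmult_integral _ _ Hprod) as [-> | ->].
    - assert (Hc : 0 < c) by (unfold c; lra).
      replace (2 ^ n * INR (fact n)) with (c * (2 ^ n * INR (fact n)) * / c)
        by (field; lra).
      rewrite Rmult_0_l, Rplus_0_l.
      apply Rmult_le_compat_r; [apply Rlt_le, Rinv_0_lt_compat, Hc|]. unfold c. nra.
    - pose proof (pos_INR (fact n)). nra. }
  assert (HVt : V t <= V 0).
  { apply (le_value_at_0_of_deriv_sign V _ t HV). intros y.
    replace (y * (-2 * y * g (S n) y ^ 2 / (INR n + 1)))
      with (-2 * (y * y * g (S n) y ^ 2 / (INR n + 1))) by (unfold Rdiv; ring).
    assert (0 <= y * y * g (S n) y ^ 2 / (INR n + 1))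
      by (apply Rmult_le_pos; [nra|apply Rlt_le, Rinv_0_lt_compat; lra]).
    lra. }
  assert (0 <= g (S n) t * g (S n) t * / c)
    by (apply Rmult_le_pos; [nra|apply Rlt_le, Rinv_0_lt_compat; unfold c; lra]).
  assert (g n t ^ 2 <= V t) by (unfold V; simpl pow; lra).
  lra.
Qed.

End GaussDerivatives.

Section TaylorLagrange.

Variable f : nat -> R -> R.
Hypothesis f_deriv : forall n t, derivable_pt_lim (f n) t (f (S n) t).

Lemma Derive_n_family n t : Derive_n (f 0%nat) n t = f n t.
Proof.
  revert t; induction n as [|n IH]; intros t; [reflexivity|]. simpl.
  rewrite (Derive_ext _ (f n)) by exact IH.
  apply is_derive_unique, is_derive_Reals, f_deriv.
Qed.

Lemma ex_derive_n_family n t : ex_derive_n (f 0%nat) n t.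
Proof.
  destruct n as [|n]; [exact I|]. simpl.
  exists (f (S n) t). apply is_derive_Reals.
  replace (Derive_n (f 0%nat) n) with (f n)
    by (apply functional_extensionality; intros; symmetry; apply Derive_n_family).
  apply f_deriv.
Qed.

Lemma taylor_lagrange_family_pos p u x : 0 < x -> exists xi,
  f 0%nat (u + x) - sumN p (fun k => f k u * x ^ k / INR (fact k)) = f p xi * x ^ p / INR (fact p).
Proof.
  intros Hx. destruct p as [|p].
  - exists (u + x). simpl. lra.
  - destruct (Taylor_Lagrange (f 0%nat) p u (u + x) ltac:(lra)
      (fun t _ k _ => ex_derive_n_family k t)) as [xi [_ Hxi]].
    exists xi. rewrite sumN_sum_f_R0, Hxi, Derive_n_family.
    replace (u + x - u) with x by ring.
    rewrite (sum_eq _ (fun k => f k u * x ^ k / INR (fact k)));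
      [unfold Rdiv; ring|].
    intros k _. rewrite Derive_n_family. unfold Rdiv; ring.
Qed.

End TaylorLagrange.

(* The case [x < 0] reduces to [x > 0] for the reflected family [(-1)^n f n (- t)]. *)
Lemma taylor_lagrange_family (f : nat -> R -> R)
  (f_deriv : forall n t, derivable_pt_lim (f n) t (f (S n) t)) p u x : exists xi,
  f 0%nat (u + x) - sumN p (fun k => f k u * x ^ k / INR (fact k)) = f p xi * x ^ p / INR (fact p).
Proof.
  destruct (Rtotal_order 0 x) as [Hx|[<-|Hx]].
  - exact (taylor_lagrange_family_pos f f_deriv p u x Hx).
  - exists u. rewrite Rplus_0_r. destruct p as [|p]; [simpl; lra|].
    rewrite pow_i, Rmult_0_r, Rdiv_0_l by lia.
    induction p as [|p IH]; simpl in *; [lra|].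
    rewrite Rmult_0_l, Rmult_0_r, Rdiv_0_l, Rplus_0_r. exact IH.
  - set (fr := fun n t => (-1) ^ n * f n (- t)).
    assert (fr_deriv : forall n t, derivable_pt_lim (fr n) t (fr (S n) t)).
    { intros n t. unfold fr.
      eapply derivable_pt_lim_eq_value; [|apply derivable_pt_lim_scal].
      2: exact (derivable_pt_lim_comp _ _ _ _ _ (derivable_pt_lim_opp _ _ _
                  (derivable_pt_lim_id t)) (f_deriv n (- t))).
      simpl. ring. }
    destruct (taylor_lagrange_family_pos fr fr_deriv p (- u) (- x) ltac:(lra)) as [xi Hxi].
    exists (- xi).
    assert (Hopp : forall k y, fr k (- y) * (- x) ^ k = f k y * x ^ k).
    { intros k y. unfold fr. rewrite Ropp_involutive.
      replace (- x) with (-1 * x) by ring.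
      rewrite Rpow_mult_distr, <- (Rmult_1_l (f k y * x ^ k)), <- (pow_m1_mul_self k).
      ring. }
    rewrite <- Hopp, Ropp_involutive, <- Hxi. f_equal.
    + unfold fr. rewrite <- Ropp_plus_distr, Ropp_involutive. simpl. ring.
    + apply sumN_ext. intros k _. now rewrite Hopp.
Qed.

Lemma Rabs_le_of_pow2_le a b : a ^ 2 <= b ^ 2 -> 0 <= b -> Rabs a <= b.
Proof. intros Hab Hb. rewrite <- (Rabs_pos_eq b Hb). apply Rsqr_le_abs_0. unfold Rsqr. nra. Qed.

Lemma taylor_term_sq_le c y r n : c ^ 2 <= 2 ^ n * INR (fact n) -> y ^ 2 <= r ^ 2 / 2 ->
  (c * y ^ n / INR (fact n)) ^ 2 <= (r ^ n) ^ 2 / INR (fact n).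
Proof.
  intros Hc Hy. pose proof (INR_fact_lt_0 n) as Hf.
  assert (Hpow : forall z, (z ^ n) ^ 2 = (z ^ 2) ^ n)
    by (intros; rewrite <- !pow_mult, Nat.mul_comm; reflexivity).
  replace ((c * y ^ n / INR (fact n)) ^ 2) with (c ^ 2 * (y ^ 2) ^ n / INR (fact n) ^ 2)
    by (rewrite <- Hpow; field; lra).
  replace ((r ^ n) ^ 2) with (2 ^ n * (r ^ 2 / 2) ^ n)
    by (rewrite Hpow, <- Rpow_mult_distr; f_equal; field).
  assert ((y ^ 2) ^ n <= (r ^ 2 / 2) ^ n) by (apply pow_incr; split; [apply pow2_ge_0|auto]).
  assert (0 <= (y ^ 2) ^ n) by (apply pow_le, pow2_ge_0).
  assert (0 <= 2 ^ n) by (apply pow_le; lra).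
  apply Rle_trans with (2 ^ n * INR (fact n) * (r ^ 2 / 2) ^ n / INR (fact n) ^ 2).
  - unfold Rdiv. apply Rmult_le_compat_r.
    + apply Rlt_le, Rinv_0_lt_compat. nra.
    + apply Rmult_le_compat; auto. apply pow2_ge_0.
  - right. field. lra.
Qed.

Section GaussTaylor.

Variable g : nat -> R -> R.
Hypothesis g_0 : forall t, g 0%nat t = gauss t.
Hypothesis g_deriv : forall n t, derivable_pt_lim (g n) t (g (S n) t).

Variables (p : nat) (u y r : R).
Hypothesis r_range : 0 <= r < 1.
Hypothesis y_small : y ^ 2 <= r ^ 2 / 2.

Let taylor_poly := sumN p (fun k => g k u * y ^ k / INR (fact k)).

Lemma gauss_taylor_poly_abs_le : Rabs taylor_poly <= (1 - r ^ p) / (1 - r).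
Proof.
  rewrite <- sumN_geom by lra. eapply Rle_trans; [apply sumN_abs|].
  apply sumN_le. intros k _. apply Rabs_le_of_pow2_le; [|apply pow_le; lra].
  eapply Rle_trans;
    [apply taylor_term_sq_le; [apply (gauss_deriv_sq_le g g_0 g_deriv)|exact y_small]|].
  pose proof (pow2_ge_0 (r ^ k)). pose proof (INR_fact_lt_0 k).
  assert (1 <= INR (fact k)) by (apply (le_INR 1), lt_O_fact).
  unfold Rdiv. rewrite <- (Rmult_1_r ((r ^ k) ^ 2)) at 2.
  apply Rmult_le_compat_l; [lra|]. rewrite <- Rinv_1. apply Rinv_le_contravar; lra.
Qed.

Lemma gauss_taylor_rem_abs_le : Rabs (gauss (u + y) - taylor_poly) <= r ^ p / sqrt (INR (fact p)).
Proof.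
  pose proof (INR_fact_lt_0 p) as Hfact. pose proof (sqrt_lt_R0 _ Hfact).
  destruct (taylor_lagrange_family g g_deriv p u y) as [xi Hxi].
  unfold taylor_poly. rewrite <- g_0, Hxi.
  apply Rabs_le_of_pow2_le.
  - replace ((r ^ p / sqrt (INR (fact p))) ^ 2) with ((r ^ p) ^ 2 / INR (fact p)).
    + apply taylor_term_sq_le; [apply (gauss_deriv_sq_le g g_0 g_deriv)|exact y_small].
    + unfold Rdiv. rewrite Rpow_mult_distr, pow_inv. simpl (sqrt _ ^ 2).
      rewrite Rmult_1_r, sqrt_sqrt; lra.
  - apply Rmult_le_pos; [apply pow_le; lra|apply Rlt_le, Rinv_0_lt_compat; lra].
Qed.

End GaussTaylor.

Lemma G_approx_prodN H D p h cQ Rs q : let s := sqrt (2 * h ^ 2) in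
  G_approx H D p h cQ Rs q =
  sum_list Rs (fun r => prodN D (fun d => sumN p (fun n =>
    gauss_deriv H n (/ s * (cQ d - r d)) * (/ s * (q d - cQ d)) ^ n / INR (fact n)))).
Proof.
  intros s. set (F := fun r d n =>
    gauss_deriv H n (/ s * (cQ d - r d)) * (/ s * (q d - cQ d)) ^ n / INR (fact n)).
  transitivity (sum_multi D p (fun b => sum_list Rs (fun r => prodN D (fun d => F r d (b d))))).
  - unfold G_approx, sum_multi. f_equal. apply functional_extensionality. intros b.
    unfold local_moment. rewrite sum_list_mult_r. apply sum_list_ext. intros r.
    unfold mabs, mfact, h_multi, mpow. rewrite pow_sumNat. unfold Rdiv.
    rewrite prodN_inv, <- !prodN_mult. apply prodN_ext. intros d _.
    unfold F, vscale, vsub. fold s. rewrite hermite_fun_gauss_deriv.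
    transitivity ((-1) ^ b d * (-1) ^ b d *
      (gauss_deriv H (b d) (/ s * (cQ d - r d)) * (/ s * (q d - cQ d)) ^ b d
       / INR (fact (b d)))); [unfold Rdiv; ring|].
    now rewrite pow_m1_mul_self, Rmult_1_l.
  - unfold sum_multi. rewrite sum_multi_aux_sum_list. apply sum_list_ext. intros r.
    apply sum_multi_prodN.
Qed.

Lemma G_exact_prodN D h Rs q c : h <> 0 -> let s := sqrt (2 * h ^ 2) in
  G_exact D h Rs q =
  sum_list Rs (fun r => prodN D (fun d => gauss (/ s * (c d - r d) + / s * (q d - c d)))).
Proof.
  intros Hh s. unfold G_exact. apply sum_list_ext. intros r.
  unfold norm2sq. rewrite exp_opp_sumN. apply prodN_ext. intros d _.
  unfold gauss, vsub. f_equal.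
  replace (/ s * (c d - r d) + / s * (q d - c d)) with (/ s * (q d - r d)) by ring.
  rewrite Rpow_mult_distr, pow_inv. unfold s. rewrite pow2_sqrt by nra.
  field. exact Hh.
Qed.

Lemma C_diag n : C n n = 1.
Proof. unfold C. rewrite Nat.sub_diag. simpl INR. field. apply INR_fact_neq_0. Qed.

Lemma pow_plus_sub_pow_binomial m a b c : c <> 0 ->
  (a / c + b / c) ^ S m - (a / c) ^ S m =
  / c ^ S m * sum_f_R0 (fun k => C (S m) k * a ^ k * b ^ (S m - k)) m.
Proof.
  intros Hc. rewrite binomial, tech5, C_diag, Nat.sub_diag, pow_O, scal_sum.
  rewrite Rmult_1_l, Rmult_1_r. unfold Rminus. rewrite Rplus_assoc, Rplus_opp_r, Rplus_0_r.
  apply sum_eq. intros i Hi. unfold Rdiv.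
  rewrite !Rpow_mult_distr, !pow_inv.
  replace (c ^ S m) with (c ^ i * c ^ (S m - i)) by (rewrite <- pow_add; f_equal; lia).
  rewrite Rinv_mult. ring.
Qed.

Lemma scaled_sq_le h r z : 0 < h -> Rabs z < r * h -> (/ sqrt (2 * h ^ 2) * z) ^ 2 <= r ^ 2 / 2.
Proof.
  intros Hh Hz.
  rewrite Rpow_mult_distr, pow_inv, pow2_sqrt by nra.
  assert (z ^ 2 <= (r * h) ^ 2).
  { rewrite <- (pow2_abs z). apply pow_incr. split; [apply Rabs_pos|lra]. }
  apply Rle_trans with (/ (2 * h ^ 2) * (r * h) ^ 2).
  - apply Rmult_le_compat_l; [apply Rlt_le, Rinv_0_lt_compat; nra|assumption].
  - right. field. lra.
Qed.

Theorem mainTheorem1 (H : nat -> R -> R) (HH : is_hermite_poly H)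
  (D p : nat) (hD : (1 <= D)%nat) (hp : (1 <= p)%nat)
  (h : R) (hh : 0 < h)
  (Q : list (nat -> R)) (hQ : NoDup Q) (hQD : forall q, In q Q -> in_RD D q)
  (cQ : nat -> R) (hcQ : in_RD D cQ)
  (Rs : list (nat -> R)) (hR : NoDup Rs) (hRD : forall r, In r Rs -> in_RD D r)
  (r0 : R) (hr0 : 0 <= r0 < 1)
  (hcover : forall q, In q Q -> forall d, (d < D)%nat -> Rabs (q d - cQ d) < r0 * h) :
  forall q, In q Q ->
    Rabs (G_approx H D p h cQ Rs q - G_exact D h Rs q) <=
      INR (length Rs) / (1 - r0) ^ D *
      sum_f_R0 (fun k => C D k * (1 - r0 ^ p) ^ k *
                  (r0 ^ p / sqrt (INR (fact p))) ^ (D - k)) (D - 1).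
Proof.
  (* Distinctness of the points, their support in the first [D] coordinates and [p >= 1]
     are not needed. *)
  intros q Hq.
  set (rem := r0 ^ p / sqrt (INR (fact p))).
  assert (Hrem : 0 <= rem).
  { pose proof (sqrt_lt_R0 _ (INR_fact_lt_0 p)). pose proof (pow_le r0 p (proj1 hr0)).
    apply Rmult_le_pos; [lra|apply Rlt_le, Rinv_0_lt_compat; lra]. }
  assert (Hr0p : r0 ^ p <= 1) by (rewrite <- (pow1 p); apply pow_incr; lra).
  (* The stated bound is the one obtained with the weaker remainder estimate [rem / (1 - r0)]. *)
  assert (Hrem_le : rem <= rem / (1 - r0)).
  { unfold Rdiv. rewrite <- (Rmult_1_r rem) at 1. apply Rmult_le_compat_l; [lra|].
    rewrite <- Rinv_1. apply Rinv_le_contravar; lra. }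
  rewrite G_approx_prodN, (G_exact_prodN D h Rs q cQ) by lra. rewrite sum_list_minus.
  eapply Rle_trans; [apply sum_list_abs_le; intros r;
    apply prodN_sub_bound with (A := (1 - r0 ^ p) / (1 - r0)) (B := rem / (1 - r0))|].
  - apply Rmult_le_pos; [lra|apply Rlt_le, Rinv_0_lt_compat; lra].
  - lra.
  - intros d Hd. pose proof (scaled_sq_le h r0 _ hh (hcover q Hq d Hd)) as Hx. split.
    + exact (gauss_taylor_poly_abs_le _ (gauss_deriv_0 H HH) (gauss_deriv_derivable H HH)
               _ _ _ _ hr0 Hx).
    + eapply Rle_trans; [|exact Hrem_le].
      exact (gauss_taylor_rem_abs_le _ (gauss_deriv_0 H HH) (gauss_deriv_derivable H HH)
               _ _ _ _ hr0 Hx).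
  - right. destruct D as [|m]; [lia|]. replace (S m - 1)%nat with m by lia.
    rewrite pow_plus_sub_pow_binomial by lra. unfold Rdiv. ring.
Qed.
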